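(* Let a group $G$ act on a real tree $T$ and let $g,h\in G$ be such that $\langle g,h\rangle$ acts irreducibly on $T$. Suppose that $g$ is either elliptic or equal to $g_0^m$ for some weakly $\lambda$-stable hyperbolic element $g_0$ and some integer $m\ge10\max\{\lambda,1\}$ (with $\lambda>0$), and make the same assumption on $h$. Then the pair $\{g,h\}$ is acylindrical.
   Context: For an isometry $g$: $tl(g)=\inf_p d(p,gp)$; elliptic means having a fixed point, hyperbolic otherwise; $A(g)$ is the fixed set or translation axis. $E(f)$: elements preserving $A(f)$ setwise. Hyperbolic $h$ is weakly $\lambda$-stable if for all $g\in G$, $|A(h)\cap gA(h)|>\lambda tl(h)$ implies $g\in E(h)$. An action is abelian if $tl(gh)\le tl(g)+tl(h)$ for all $g,h$; dihedral if not abelian but this inequality holds for all pairs of hyperbolic elements; irreducible if neither. A pair $g,h$ is acylindrical if $\langle g,h\rangle$ acts irreducibly on $T$, $|A(g)\cap A(h)|\le\frac12\max\{tl(g),tl(h)\}$, and each of $g,h$ that is hyperbolic is weakly $\frac13$-stable. *)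

From Stdlib Require Import Reals.
From Coquelicot Require Import Rbar Lub.
Open Scope R_scope.

Record Group := {
  gcar :> Type;
  gmul : gcar -> gcar -> gcar;
  ginv : gcar -> gcar;
  gone : gcar;
  gmulA : forall a b c, gmul a (gmul b c) = gmul (gmul a b) c;
  gmul1l : forall a, gmul gone a = a;
  gmulVl : forall a, gmul (ginv a) a = gone
}.
Arguments gmul {G} : rename.
Arguments ginv {G} : rename.
Arguments gone {G} : rename.

Fixpoint gpow {G : Group} (a : G) (n : nat) : G :=
  match n with O => gone | S k => gmul a (gpow a k) end.

Inductive gen2 {G : Group} (g h : G) : G -> Prop :=
| gen2_one : gen2 g h gone
| gen2_g : gen2 g h g
| gen2_h : gen2 g h h
| gen2_inv : forall x, gen2 g h x -> gen2 g h (ginv x)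
| gen2_mul : forall x y, gen2 g h x -> gen2 g h y -> gen2 g h (gmul x y).

Definition gromov {X : Type} (d : X -> X -> R) (w x y : X) : R :=
  (d x w + d y w - d x y) / 2.

Record RealTree := {
  tcar :> Type;
  tdist : tcar -> tcar -> R;
  tpt : tcar;  (* nonempty *)
  tdist_ge0 : forall x y, 0 <= tdist x y;
  tdist_eq0 : forall x y, tdist x y = 0 <-> x = y;
  tdist_sym : forall x y, tdist x y = tdist y x;
  tdist_tri : forall x y z, tdist x z <= tdist x y + tdist y z;
  tgeodesic : forall x y, exists gam : R -> tcar,
      gam 0 = x /\ gam (tdist x y) = y /\
      forall s t, 0 <= s <= tdist x y -> 0 <= t <= tdist x y ->
        tdist (gam s) (gam t) = Rabs (s - t);
  t0hyp : forall w x y z,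
      gromov tdist w x y >= Rmin (gromov tdist w x z) (gromov tdist w y z)
}.
Arguments tdist {T} : rename.

Record Action (G : Group) (T : RealTree) := {
  act : G -> T -> T;
  act_one : forall p, act gone p = p;
  act_mul : forall a b p, act (gmul a b) p = act a (act b p);
  act_isom : forall a p q, tdist (act a p) (act a q) = tdist p q
}.
Arguments act {G T} _ _ _.

Section Notions.
Context {G : Group} {T : RealTree} (A : Action G T).

Definition tl (g : G) : R :=
  real (Glb_Rbar (fun r => exists p : T, r = tdist p (act A g p))).

Definition elliptic (g : G) : Prop := exists p : T, act A g p = p.
Definition hyperbolic (g : G) : Prop := ~ elliptic g.

(* A(g): fixed set if elliptic, translation axis (min set) if hyperbolic *)
Definition Ax (g : G) (p : T) : Prop :=
  (elliptic g /\ act A g p = p) \/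
  (hyperbolic g /\ tdist p (act A g p) = tl g).

Definition img (g : G) (S : T -> Prop) (q : T) : Prop :=
  exists p, S p /\ act A g p = q.

(* |S| : length (diameter) of a subset; -oo if empty, +oo if unbounded *)
Definition len (S : T -> Prop) : Rbar :=
  Lub_Rbar (fun r => exists x y, S x /\ S y /\ r = tdist x y).

Definition inE (f g : G) : Prop :=
  forall q, img g (Ax f) q <-> Ax f q.

Definition weakly_stable (lam : R) (h : G) : Prop :=
  hyperbolic h /\
  forall g : G,
    Rbar_lt (lam * tl h) (len (fun p => Ax h p /\ img g (Ax h) p)) -> inE h g.

Definition abelian2 (g h : G) : Prop :=
  forall a b, gen2 g h a -> gen2 g h b -> tl (gmul a b) <= tl a + tl b.
Definition dihedral2 (g h : G) : Prop :=
  ~ abelian2 g h /\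
  forall a b, gen2 g h a -> gen2 g h b -> hyperbolic a -> hyperbolic b ->
    tl (gmul a b) <= tl a + tl b.
Definition irreducible2 (g h : G) : Prop :=
  ~ abelian2 g h /\ ~ dihedral2 g h.

Definition acylindrical_pair (g h : G) : Prop :=
  irreducible2 g h /\
  Rbar_le (len (fun p => Ax g p /\ Ax h p)) (/2 * Rmax (tl g) (tl h)) /\
  (hyperbolic g -> weakly_stable (1/3) g) /\
  (hyperbolic h -> weakly_stable (1/3) h).

Definition good_elt (lam : R) (g : G) : Prop :=
  elliptic g \/
  exists (g0 : G) (m : nat), weakly_stable lam g0 /\
    INR m >= 10 * Rmax lam 1 /\ g = gpow g0 m.

End Notions.

(* In a real tree the translation length of an isometry F is max(0, d(p,F²p) - d(p,Fp)) for
   every p, and a hyperbolic F translates its axis A(F) = {p | d(p,Fp) = tl F}, a line, by tl F.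
   Hence A(g0^m) = A(g0) and tl(g0^m) = m tl(g0), and weak 1/3-stability of g0^m follows from
   weak λ-stability of g0 because m/3 >= λ.
   If A(g) ∩ A(h) were longer than max(tl g, tl h)/2, then <g,h> would act abelianly,
   contradicting irreducibility. When g and h are elliptic they have a common fixed point.
   Otherwise, as m >= 10 max(λ,1), the overlap exceeds λ tl(k0) plus the translation length of
   the other generator's root, for the stable root k0 of a hyperbolic generator; so the other
   generator (or its root) maps a segment of A(k0) longer than λ tl(k0) into A(k0), hence
   preserves A(k0). It then translates the line A(k0): a hyperbolic element cannot flip it and
   an elliptic one fixes two of its points. Thus <g,h> acts on A(k0) by translations, and tl is
   the absolute value of the translation amount, which is subadditive. *)

From Stdlib Require Import Reals Lra Lia Classical.
From Coquelicot Require Import Rbar Lub.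
Open Scope R_scope.

Ltac split_Rabs := repeat match goal with
  | |- context [Rabs ?x] => let H := fresh "Habs" in destruct (Rcase_abs x) as [H|H];
        [rewrite (Rabs_left x H) in * | rewrite (Rabs_right x H) in *]
  | _ : context [Rabs ?x] |- _ => let H := fresh "Habs" in destruct (Rcase_abs x) as [H|H];
        [rewrite (Rabs_left x H) in * | rewrite (Rabs_right x H) in *]
  end.

Ltac split_Rmax := unfold Rmax in *; repeat match goal with
  | |- context [Rle_dec ?x ?y] => destruct (Rle_dec x y)
  | _ : context [Rle_dec ?x ?y] |- _ => destruct (Rle_dec x y)
  end.

Lemma Rabs_sub_of_Rmax_eq u tau X :
  0 <= tau -> Rabs (u + tau) + X = 2 * Rmax (Rabs u) tau -> X = Rabs (u - tau).
Proof. intros. split_Rmax; split_Rabs; lra. Qed.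

Lemma Rabs_trilaterate tau a b X u :
  0 < tau -> Rabs (b - a) = tau -> Rabs (X - a) = Rabs u -> Rabs (X - b) = Rabs (u - tau) ->
  (b - a = tau /\ X = a + u) \/ (b - a = - tau /\ X = a - u).
Proof. intros. split_Rabs; first [left; split; lra | right; split; lra | lra]. Qed.

Section TreeGeometry.
Context {T : RealTree}.
Notation d := (@tdist T).

Lemma tdist_xx x : d x x = 0.
Proof. now apply tdist_eq0. Qed.

Lemma tdist_le0_eq x y : d x y <= 0 -> x = y.
Proof. intro H. apply tdist_eq0. pose proof (tdist_ge0 T x y). lra. Qed.

Lemma four_point a b c e :
  d a b + d c e <= d a c + d b e \/ d a b + d c e <= d a e + d b c.
Proof.
  pose proof (t0hyp T e a b c) as H. unfold gromov, Rmin in H.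
  pose proof (tdist_sym T c e). pose proof (tdist_sym T b e).
  pose proof (tdist_sym T a e). pose proof (tdist_sym T b c).
  destruct Rle_dec; [left | right]; lra.
Qed.

Lemma dist_opposite_sides tau x0 w q r : 0 < tau ->
  d w x0 = tau -> d q w = d q x0 + tau -> d r w = Rabs (d r x0 - tau) ->
  d q r = d x0 q + d x0 r.
Proof.
  intros Htau hw hq hr.
  pose proof (tdist_ge0 T r x0). pose proof (tdist_sym T q x0). pose proof (tdist_sym T r x0).
  pose proof (tdist_sym T w r). pose proof (tdist_sym T q r). pose proof (tdist_tri T q x0 r).
  pose proof (tdist_tri T x0 q r). pose proof (tdist_sym T x0 r). pose proof (tdist_tri T x0 r q).
  destruct (four_point q w r x0); split_Rabs; lra.
Qed.

Definition is_geodesic (gam : R -> T) (x y : T) : Prop :=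
  gam 0 = x /\ gam (d x y) = y /\
  forall s t, 0 <= s <= d x y -> 0 <= t <= d x y -> d (gam s) (gam t) = Rabs (s - t).

Lemma geodesic_dist gam x y s :
  is_geodesic gam x y -> 0 <= s <= d x y -> d x (gam s) = s /\ d (gam s) y = d x y - s.
Proof.
  intros [g0 [gy gd]] hs. split.
  - rewrite <- g0 at 1. rewrite gd by lra. split_Rabs; lra.
  - rewrite <- gy at 1. rewrite gd by lra. split_Rabs; lra.
Qed.

Lemma geodesics_agree x y z g1 g2 s :
  is_geodesic g1 x y -> is_geodesic g2 x z -> 0 <= s <= gromov d x y z -> g1 s = g2 s.
Proof.
  unfold gromov. intros G1 G2 hs.
  pose proof (tdist_tri T y x z). pose proof (tdist_tri T x y z). pose proof (tdist_tri T x z y).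
  pose proof (tdist_sym T y x). pose proof (tdist_sym T z x). pose proof (tdist_sym T z y).
  destruct (geodesic_dist g1 x y s G1) as [dxu duy]; [lra|].
  destruct (geodesic_dist g2 x z s G2) as [dxv dvz]; [lra|].
  set (u := g1 s) in *. set (v := g2 s) in *.
  pose proof (tdist_sym T v x). pose proof (tdist_sym T u x).
  pose proof (tdist_sym T v y). pose proof (tdist_sym T u y). pose proof (tdist_sym T v z).
  assert (Hyv : d y v <= d x y - s \/ d y v <= d y z + s - d x z)
    by (destruct (four_point y v z x); lra).
  apply tdist_le0_eq. destruct (four_point u v y x); lra.
Qed.

Definition isometry (F : T -> T) : Prop := forall p q, d (F p) (F q) = d p q.

Section Isometry.
Variable F : T -> T.
Hypothesis HF : isometry F.

Lemma displacement_gap_le p q : d p (F (F p)) - d p (F p) <= d q (F q).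
Proof.
  pose proof (tdist_tri T (F p) (F q) q). pose proof (tdist_tri T p (F q) q).
  pose proof (tdist_tri T p q (F q)). pose proof (tdist_tri T (F p) q (F q)).
  destruct (four_point p (F (F p)) (F p) (F q)); rewrite ?HF in *;
  rewrite ?(tdist_sym T (F q) q), ?(tdist_sym T q (F p)), ?(tdist_sym T (F p) p) in *; lra.
Qed.

(* With D = d(p,Fp), the geodesics [Fp,p] and F[p,Fp] = [Fp,F²p] share their initial segment of
   length r = (D - max(0,gap))/2, so the point q at distance r from p on [p,Fp] satisfies
   d(q,Fq) = D - 2r. *)
Lemma exists_displacement_le_gap p :
  exists q, d q (F q) <= Rmax 0 (d p (F (F p)) - d p (F p)).
Proof.
  set (D := d p (F p)). set (gap := d p (F (F p)) - D).
  assert (gapD : gap <= D).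
  { unfold gap, D. pose proof (tdist_tri T p (F p) (F (F p))). rewrite HF in *. lra. }
  assert (HM : 0 <= Rmax 0 gap /\ gap <= Rmax 0 gap /\ Rmax 0 gap <= D).
  { pose proof (tdist_ge0 T p (F p)) as H0. fold D in H0. split_Rmax; lra. }
  set (r := (D - Rmax 0 gap) / 2).
  destruct (tgeodesic T p (F p)) as [gam Hgam].
  assert (Hback : is_geodesic (fun u => gam (D - u)) (F p) p).
  { destruct Hgam as [g0 [gD gi]]. fold D in gD, gi.
    unfold is_geodesic. rewrite (tdist_sym T (F p) p). fold D.
    split; [|split].
    - now rewrite Rminus_0_r.
    - now replace (D - D) with 0 by ring.
    - intros a b Ha Hb. rewrite gi by lra.
      replace (D - a - (D - b)) with (b - a) by ring. apply Rabs_minus_sym. }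
  assert (Himg : is_geodesic (fun u => F (gam u)) (F p) (F (F p))).
  { destruct Hgam as [g0 [gD gi]]. unfold is_geodesic. rewrite HF. fold D in gD, gi |- *.
    split; [|split]; [now rewrite g0 | now rewrite gD |].
    intros a b Ha Hb. rewrite HF. now apply gi. }
  assert (E : gam (D - r) = F (gam r)).
  { apply (geodesics_agree (F p) p (F (F p)) _ _ r Hback Himg).
    unfold gromov. rewrite HF, (tdist_sym T (F p) p). fold D.
    unfold r, gap in *. lra. }
  exists (gam r). rewrite <- E.
  destruct Hgam as [_ [_ gi]]. fold D in gi. rewrite gi by (unfold r; lra).
  unfold r. split_Rabs; lra.
Qed.

Lemma iter_isometry n p q : d (Nat.iter n F p) (Nat.iter n F q) = d p q.
Proof. induction n; simpl; [reflexivity | now rewrite HF]. Qed.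

Variable tau : R.

(* For tau = tl F and F hyperbolic this is the translation axis (minimal displacement set). *)
Definition axis (p : T) : Prop := d p (F p) = tau.

Lemma axis_F p : axis p -> axis (F p).
Proof. unfold axis. now rewrite HF. Qed.

Lemma axis_orientation x y : axis x -> axis y -> tau < d x y ->
  d x (F y) = d x y + tau -> d (F x) y = d x y - tau.
Proof.
  unfold axis. intros hx hy hl hv.
  pose proof (HF x y). pose proof (tdist_tri T x (F x) y). pose proof (tdist_sym T (F x) x).
  pose proof (tdist_sym T (F y) y). pose proof (tdist_sym T y (F x)).
  pose proof (tdist_sym T (F y) (F x)).
  destruct (four_point x (F y) (F x) y); lra.
Qed.

Hypothesis gap : forall p, d p (F (F p)) = d p (F p) + tau.

Lemma tau_le_displacement q : tau <= d q (F q).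
Proof. pose proof (displacement_gap_le (tpt T) q). rewrite gap in *. lra. Qed.

Lemma axis_dist_F2 p : axis p -> d p (F (F p)) = 2 * tau.
Proof. unfold axis. intro. rewrite gap. lra. Qed.

Lemma displacement_iter p k : 0 < tau -> d p (Nat.iter (S k) F p) = d p (F p) + INR k * tau.
Proof.
  intro Htau. set (x := fun i => Nat.iter i F p).
  assert (Hx : forall i j, d (x i) (x (i + j)%nat) = d p (x j))
    by (intros i j; unfold x; rewrite Nat.iter_add; apply iter_isometry).
  assert (Hstep : forall n, d p (x (S n)) = d p (F p) + INR n * tau /\
                            d p (x (S (S n))) = d p (F p) + INR (S n) * tau).
  { intro n. induction n as [|n [IH1 IH2]].
    - unfold x. simpl. rewrite gap. split; lra.
    - split; [exact IH2|].
      pose proof (Hx (S n) 2%nat) as d13. pose proof (Hx (S n) 1%nat) as d12.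
      pose proof (Hx (S (S n)) 1%nat) as d23.
      replace (S n + 2)%nat with (S (S (S n))) in d13 by lia.
      replace (S n + 1)%nat with (S (S n)) in d12 by lia.
      replace (S (S n) + 1)%nat with (S (S (S n))) in d23 by lia.
      replace (d p (x 2%nat)) with (d p (F p) + tau) in d13 by (unfold x; simpl; now rewrite gap).
      change (x 1%nat) with (F p) in d12, d23.
      rewrite !S_INR in *. pose proof (pos_INR n).
      set (x1 := x (S n)) in *. set (x2 := x (S (S n))) in *. set (x3 := x (S (S (S n)))) in *.
      pose proof (tdist_sym T x1 p). pose proof (tdist_sym T x3 x2).
      pose proof (tdist_sym T x3 x1). pose proof (tdist_sym T x3 p).
      destruct (four_point x1 x3 p x2); destruct (four_point p x3 x1 x2); lra. }
  apply (Hstep k).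
Qed.

Lemma axis_dist_shift x y : axis x ->
  d x (F y) = d x y + tau \/ d (F x) y = d x y + tau.
Proof.
  intro hx. pose proof (axis_dist_F2 x hx). unfold axis in hx.
  pose proof (HF y x). pose proof (HF (F x) x). pose proof (HF x y). pose proof (HF (F x) y).
  pose proof (tdist_tri T x (F x) (F y)). pose proof (tdist_tri T (F x) x y).
  pose proof (tdist_sym T (F (F x)) (F x)). pose proof (tdist_sym T (F x) x).
  pose proof (tdist_sym T y x). pose proof (tdist_sym T (F (F x)) (F y)).
  pose proof (tdist_sym T (F y) (F x)).
  destruct (four_point x (F (F x)) (F y) (F x)); [left | right]; lra.
Qed.

Lemma axis_three_points w q : axis w -> axis q ->
  d q w + d q (F (F w)) = 2 * Rmax (d q (F w)) tau /\
  (d q w = d q (F w) + tau \/ d q (F (F w)) = d q (F w) + tau).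
Proof.
  intros hw hq. pose proof (axis_dist_F2 w hw) as dwe. pose proof (axis_F w hw) as dce.
  unfold axis in hw, hq, dce.
  set (c := F w) in *. set (e := F c) in *.
  assert (dcw : d c w = tau) by (rewrite tdist_sym; auto).
  pose proof (tdist_tri T q c w). pose proof (tdist_tri T q c e). pose proof (tdist_tri T q w c).
  pose proof (tdist_tri T q e c). pose proof (tdist_sym T c w). pose proof (tdist_sym T e c).
  pose proof (tdist_sym T q w). pose proof (tdist_sym T q e). pose proof (tdist_sym T q c).
  pose proof (tdist_sym T w q). pose proof (tdist_sym T e q).
  assert (M : d q w = d q c + tau \/ d q e = d q c + tau)
    by (destruct (four_point w e q c); [left | right]; lra).
  split; [|exact M].
  assert (dFqc : d (F q) c = d q w) by apply HF.
  assert (dFqe : d e (F q) = d c q) by apply HF.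
  pose proof (tdist_sym T (F q) c). pose proof (tdist_sym T e (F q)). pose proof (tdist_sym T c e).
  pose proof (tdist_tri T w q c). pose proof (tdist_tri T c q e).
  destruct M; destruct (four_point q e (F q) c); split_Rmax; lra.
Qed.

Lemma axis_iter_approach q x : 0 <= tau -> axis q -> axis x ->
  d q (F x) = Rabs (d q x - tau) ->
  forall K, d q (Nat.iter K F x) = Rabs (d q x - INR K * tau).
Proof.
  intros Htau hq hx h1.
  assert (LK : forall K, axis (Nat.iter K F x))
    by (induction K; simpl; auto using axis_F).
  assert (Hstep : forall K, d q (Nat.iter K F x) = Rabs (d q x - INR K * tau) /\
                    d q (Nat.iter (S K) F x) = Rabs (d q x - INR (S K) * tau)).
  { induction K as [|K [I1 I2]].
    - simpl. rewrite Rmult_0_l, Rminus_0_r, Rmult_1_l. split; [|exact h1].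
      rewrite Rabs_right; [reflexivity | apply Rle_ge, tdist_ge0].
    - split; [exact I2|].
      destruct (axis_three_points (Nat.iter K F x) q (LK K) hq) as [S1 _].
      change (F (Nat.iter K F x)) with (Nat.iter (S K) F x) in S1.
      change (F (Nat.iter (S K) F x)) with (Nat.iter (S (S K)) F x) in S1.
      rewrite I1, I2 in S1.
      replace (d q x - INR K * tau) with (d q x - INR (S K) * tau + tau) in S1
        by (rewrite S_INR; ring).
      apply Rabs_sub_of_Rmax_eq in S1; [|exact Htau].
      rewrite S1, (S_INR (S K)). f_equal. ring. }
  intro K. apply Hstep.
Qed.

(* Iterating F from x0 moves far beyond q and r, where the four-point condition pins d q r. *)
Lemma axis_same_side x0 q r : 0 < tau -> axis x0 -> axis q -> axis r ->
  d q (F x0) = Rabs (d q x0 - tau) -> d r (F x0) = Rabs (d r x0 - tau) ->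
  d q r = Rabs (d x0 q - d x0 r).
Proof.
  intros Htau h0 hq hr Hq Hr.
  destruct (INR_archimed tau (d q x0 + d r x0) Htau) as [K HK].
  assert (H0 : d x0 (F x0) = Rabs (d x0 x0 - tau)).
  { rewrite tdist_xx, h0. rewrite Rabs_left1 by lra. lra. }
  pose proof (axis_iter_approach q x0 (Rlt_le _ _ Htau) hq h0 Hq K) as Eq.
  pose proof (axis_iter_approach r x0 (Rlt_le _ _ Htau) hr h0 Hr K) as Er.
  pose proof (axis_iter_approach x0 x0 (Rlt_le _ _ Htau) h0 h0 H0 K) as E0.
  set (z := Nat.iter K F x0) in *. rewrite tdist_xx in E0.
  pose proof (tdist_ge0 T q x0). pose proof (tdist_ge0 T r x0).
  rewrite Rabs_left1 in Eq, Er, E0 by lra.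
  pose proof (tdist_sym T q x0). pose proof (tdist_sym T r x0). pose proof (tdist_sym T z x0).
  pose proof (tdist_sym T r z). pose proof (tdist_tri T x0 q r). pose proof (tdist_tri T x0 r q).
  pose proof (tdist_sym T q r).
  destruct (four_point q r z x0); split_Rabs; lra.
Qed.

Lemma axis_convex x y z : axis x -> axis y -> d x z + d z y = d x y -> axis z.
Proof.
  intros hx hy hz. pose proof (axis_dist_F2 x hx) as hx2.
  pose proof (tau_le_displacement z) as Hz. pose proof (tau_le_displacement x).
  pose proof (tdist_ge0 T x (F x)).
  apply Rle_antisym; [|exact Hz].
  destruct (axis_dist_shift x y hx) as [M|M]; unfold axis in hx, hy.
  - pose proof (HF z y). pose proof (tdist_tri T z y (F y)). pose proof (tdist_tri T (F z) (F x) x).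
    pose proof (HF z x). pose proof (tdist_sym T (F x) x). pose proof (tdist_sym T z x).
    destruct (four_point z (F z) x (F y)); lra.
  - pose proof (HF z y). pose proof (tdist_tri T z x (F x)). pose proof (tdist_tri T (F z) (F y) y).
    pose proof (HF z x). pose proof (tdist_sym T (F y) y). pose proof (tdist_sym T z x).
    pose proof (tdist_sym T (F x) x).
    destruct (four_point z (F z) (F x) y); lra.
Qed.

End Isometry.
End TreeGeometry.

Notation axis_of A c := (axis (act A c) (tl A c)).

Section Action.
Context {G : Group} {T : RealTree} (A : Action G T).
Notation d := (@tdist T).
Notation ac := (act A).

Lemma act_inv_l a p : ac (ginv a) (ac a p) = p.
Proof. rewrite <- act_mul, gmulVl. apply act_one. Qed.

Lemma act_inj a p q : ac a p = ac a q -> p = q.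
Proof. intro H. rewrite <- (act_inv_l a p), <- (act_inv_l a q). congruence. Qed.

Lemma act_inv_r a p : ac a (ac (ginv a) p) = p.
Proof. apply (act_inj (ginv a)). now rewrite act_inv_l. Qed.

Lemma act_gpow c n p : ac (gpow c n) p = Nat.iter n (ac c) p.
Proof. induction n; simpl; [apply act_one | now rewrite act_mul, IHn]. Qed.

Lemma act_isometry c : isometry (ac c).
Proof. intros p q. apply act_isom. Qed.

Lemma dist_act_inv c p : d p (ac (ginv c) p) = d p (ac c p).
Proof. rewrite <- (act_isom _ _ A c), act_inv_r. apply tdist_sym. Qed.

Lemma dist_act_inv2 c p : d p (ac (ginv c) (ac (ginv c) p)) = d p (ac c (ac c p)).
Proof.
  rewrite <- (act_isom _ _ A c), act_inv_r, <- (act_isom _ _ A c), act_inv_r.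
  apply tdist_sym.
Qed.

Lemma tl_spec c :
  (forall p, tl A c <= d p (ac c p)) /\
  (forall r, (forall p, r <= d p (ac c p)) -> r <= tl A c).
Proof.
  unfold tl. set (E := fun r => exists p : T, r = d p (ac c p)).
  destruct (Glb_Rbar_correct E) as [Hlb Hglb].
  assert (H0 : Rbar_le 0 (Glb_Rbar E))
    by (apply Hglb; intros r [p ->]; apply tdist_ge0).
  assert (H1 : Rbar_le (Glb_Rbar E) (d (tpt T) (ac c (tpt T))))
    by (apply Hlb; now exists (tpt T)).
  destruct (Glb_Rbar E) as [l| |]; simpl in H0, H1 |- *; try contradiction.
  split.
  - intro p. exact (Hlb _ (ex_intro _ p eq_refl)).
  - intros r Hr. apply (Hglb r). intros x [p ->]. apply Hr.
Qed.

Lemma tl_le c p : tl A c <= d p (ac c p).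
Proof. apply (tl_spec c). Qed.

Lemma tl_glb c r : (forall p, r <= d p (ac c p)) -> r <= tl A c.
Proof. apply (tl_spec c). Qed.

Lemma tl_ge0 c : 0 <= tl A c.
Proof. apply tl_glb. intro; apply tdist_ge0. Qed.

Lemma tl_eq_gap c p : tl A c = Rmax 0 (d p (ac c (ac c p)) - d p (ac c p)).
Proof.
  apply Rle_antisym.
  - destruct (exists_displacement_le_gap (ac c) (act_isometry c) p) as [q Hq].
    pose proof (tl_le c q). lra.
  - apply Rmax_lub; [apply tl_ge0|].
    apply tl_glb. intro q. apply displacement_gap_le, act_isometry.
Qed.

Lemma elliptic_iff_gap_le0 c p : elliptic A c <-> d p (ac c (ac c p)) - d p (ac c p) <= 0.
Proof.
  split.
  - intros [q Hq]. pose proof (displacement_gap_le (ac c) (act_isometry c) p q).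
    rewrite Hq, tdist_xx in *. lra.
  - intro H. destruct (exists_displacement_le_gap (ac c) (act_isometry c) p) as [q Hq].
    exists q. rewrite Rmax_left in Hq by lra. symmetry. apply tdist_le0_eq. lra.
Qed.

Lemma tl_elliptic c : elliptic A c -> tl A c = 0.
Proof.
  intros [q Hq]. pose proof (tl_le c q). pose proof (tl_ge0 c).
  rewrite Hq, tdist_xx in *. lra.
Qed.

Lemma hyperbolic_gap c : hyperbolic A c ->
  forall p, d p (ac c (ac c p)) = d p (ac c p) + tl A c.
Proof.
  intros Hc p. rewrite (tl_eq_gap c p), Rmax_right; [ring|].
  destruct (Rle_lt_dec (d p (ac c (ac c p)) - d p (ac c p)) 0) as [H|H]; [|lra].
  exfalso. apply Hc. now apply (elliptic_iff_gap_le0 c p).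
Qed.

Lemma tl_pos_hyperbolic c : hyperbolic A c -> 0 < tl A c.
Proof.
  intro Hc. destruct (Rle_lt_dec (tl A c) 0) as [H|H]; [exfalso|exact H].
  apply Hc, (elliptic_iff_gap_le0 c (tpt T)).
  rewrite (hyperbolic_gap c Hc). lra.
Qed.

Lemma hyperbolic_gap_inv c : hyperbolic A c ->
  forall p, d p (ac (ginv c) (ac (ginv c) p)) = d p (ac (ginv c) p) + tl A c.
Proof. intros Hc p. rewrite dist_act_inv, dist_act_inv2. now apply hyperbolic_gap. Qed.

Lemma axis_ginv_iff c tau p : axis (ac (ginv c)) tau p <-> axis (ac c) tau p.
Proof. unfold axis. now rewrite dist_act_inv. Qed.

Lemma exists_axis_point c : hyperbolic A c -> exists p, axis_of A c p.
Proof.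
  intro Hc. destruct (exists_displacement_le_gap (ac c) (act_isometry c) (tpt T)) as [q Hq].
  rewrite <- tl_eq_gap in Hq. exists q. pose proof (tl_le c q). unfold axis. lra.
Qed.

Lemma dist_act_gpow c k p : hyperbolic A c ->
  d p (ac (gpow c (S k)) p) = d p (ac c p) + INR k * tl A c.
Proof.
  intro Hc. rewrite act_gpow. apply displacement_iter.
  - apply act_isometry.
  - now apply hyperbolic_gap.
  - now apply tl_pos_hyperbolic.
Qed.

Lemma tl_gpow c k : hyperbolic A c -> tl A (gpow c (S k)) = INR (S k) * tl A c.
Proof.
  intro Hc. destruct (exists_axis_point c Hc) as [p Hp]. unfold axis in Hp.
  rewrite (tl_eq_gap _ p).
  replace (ac (gpow c (S k)) (ac (gpow c (S k)) p)) with (ac (gpow c (S (k + S k))) p)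
    by (rewrite !act_gpow, <- Nat.iter_add; reflexivity).
  rewrite !dist_act_gpow, Hp, plus_INR, !S_INR by exact Hc.
  pose proof (tl_ge0 c). pose proof (pos_INR k).
  rewrite Rmax_right; [ring | nra].
Qed.

Lemma hyperbolic_gpow c k : hyperbolic A c -> hyperbolic A (gpow c (S k)).
Proof.
  intros Hc Hell. apply tl_elliptic in Hell. rewrite tl_gpow, S_INR in Hell by exact Hc.
  pose proof (tl_pos_hyperbolic c Hc). pose proof (pos_INR k). nra.
Qed.

Lemma Ax_hyperbolic c p : hyperbolic A c -> Ax A c p <-> axis_of A c p.
Proof.
  unfold Ax, axis, hyperbolic. intro Hc.
  split; [intros [[He _] | [_ E]]; tauto | now right].
Qed.

Lemma Ax_elliptic c p : elliptic A c -> Ax A c p <-> ac c p = p.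
Proof.
  unfold Ax, hyperbolic. intro Hc.
  split; [intros [[_ E] | [Hh _]]; tauto | now left].
Qed.

Lemma Ax_gpow c k p : hyperbolic A c -> Ax A (gpow c (S k)) p <-> Ax A c p.
Proof.
  intro Hc. rewrite !Ax_hyperbolic by auto using hyperbolic_gpow. unfold axis.
  rewrite dist_act_gpow, tl_gpow, S_INR by exact Hc. split; intro; lra.
Qed.

End Action.

Section AxisCoordinate.
Context {G : Group} {T : RealTree} (A : Action G T).
Notation d := (@tdist T).
Notation ac := (act A).
Variables (f : G) (x0 : T).
Hypothesis Hf : hyperbolic A f.
Hypothesis Hx0 : axis_of A f x0.
Notation L := (axis_of A f).

Lemma axis_act_closed q : L q -> L (ac f q).
Proof. apply axis_F, act_isometry. Qed.

Lemma axis_act_inv_closed q : L q -> L (ac (ginv f) q).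
Proof.
  intro Lq. apply axis_ginv_iff, axis_F; [apply act_isometry|]. now apply axis_ginv_iff.
Qed.

Definition axis_coord (q : T) : R :=
  if Rle_dec (d q (ac f x0)) (d q (ac (ginv f) x0)) then d x0 q else - d x0 q.

Lemma axis_coord_sides q : L q ->
  (d q (ac f x0) <= d q (ac (ginv f) x0) ->
     d q (ac (ginv f) x0) = d x0 q + tl A f /\ d q (ac f x0) = Rabs (d x0 q - tl A f)) /\
  (~ d q (ac f x0) <= d q (ac (ginv f) x0) ->
     d q (ac f x0) = d x0 q + tl A f /\ d q (ac (ginv f) x0) = Rabs (d x0 q - tl A f)).
Proof.
  intro Lq. set (w := ac (ginv f) x0).
  assert (Lw : L w) by now apply axis_act_inv_closed.
  destruct (axis_three_points (ac f) (act_isometry A f) (tl A f) (hyperbolic_gap A f Hf) w q Lw Lq)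
    as [S1 S2].
  pose proof Lw as dw. unfold axis in dw, Hx0.
  unfold w in S1, S2, dw. rewrite act_inv_r in S1, S2, dw. fold w in S1, S2, dw.
  pose proof (tdist_tri T q x0 w). pose proof (tdist_tri T q x0 (ac f x0)).
  pose proof (tdist_sym T q x0). pose proof (tdist_sym T w x0). pose proof (tdist_ge0 T x0 q).
  pose proof (tl_ge0 A f).
  split; intro C; destruct S2; split; split_Rmax; split_Rabs; lra.
Qed.

Lemma axis_coord_dist q r : L q -> L r -> d q r = Rabs (axis_coord q - axis_coord r).
Proof.
  intros Lq Lr.
  pose proof (tl_pos_hyperbolic A f Hf) as Htau.
  destruct (axis_coord_sides q Lq) as [Pq Nq]. destruct (axis_coord_sides r Lr) as [Pr Nr].
  assert (dw : d (ac (ginv f) x0) x0 = tl A f).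
  { pose proof (axis_act_inv_closed x0 Hx0) as Lw. unfold axis in Lw. now rewrite act_inv_r in Lw. }
  pose proof (tdist_sym T q x0). pose proof (tdist_sym T r x0).
  pose proof (tdist_ge0 T x0 q). pose proof (tdist_ge0 T x0 r).
  unfold axis_coord.
  destruct (Rle_dec (d q (ac f x0)) (d q (ac (ginv f) x0))) as [cq|cq];
  destruct (Rle_dec (d r (ac f x0)) (d r (ac (ginv f) x0))) as [cr|cr].
  - destruct (Pq cq) as [_ e1]. destruct (Pr cr) as [_ e2].
    apply (axis_same_side (ac f) (act_isometry A f) (tl A f) (hyperbolic_gap A f Hf));
      auto; [rewrite e1 | rewrite e2]; f_equal; lra.
  - destruct (Pq cq) as [e1 _]. destruct (Nr cr) as [_ e2].
    rewrite (dist_opposite_sides (tl A f) x0 (ac (ginv f) x0) q r); try lra.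
    + split_Rabs; lra.
    + rewrite e2. f_equal. lra.
  - destruct (Nq cq) as [_ e1]. destruct (Pr cr) as [e2 _].
    rewrite tdist_sym, (dist_opposite_sides (tl A f) x0 (ac (ginv f) x0) r q); try lra.
    + split_Rabs; lra.
    + rewrite e1. f_equal. lra.
  - destruct (Nq cq) as [_ e1]. destruct (Nr cr) as [_ e2].
    rewrite (axis_same_side (ac (ginv f)) (act_isometry A (ginv f)) (tl A f)
               (hyperbolic_gap_inv A f Hf) x0 q r);
      try apply axis_ginv_iff; auto.
    + split_Rabs; lra.
    + rewrite e1. f_equal. lra.
    + rewrite e2. f_equal. lra.
Qed.

Lemma axis_coord_x0 : axis_coord x0 = 0.
Proof. unfold axis_coord. rewrite tdist_xx. destruct Rle_dec; lra. Qed.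

Lemma axis_coord_act_x0 : axis_coord (ac f x0) = tl A f.
Proof.
  unfold axis_coord. rewrite tdist_xx.
  destruct Rle_dec as [_|n]; [apply Hx0 | exfalso; apply n, tdist_ge0].
Qed.

(* An isometry of the line is determined by the images of the two points x0 and f x0. *)
Lemma axis_isometry_affine C : isometry C -> (forall q, L q -> L (C q)) ->
  exists e a, (e = 1 \/ e = -1) /\ forall q, L q -> axis_coord (C q) = e * axis_coord q + a.
Proof.
  intros HC HCL.
  pose proof (tl_pos_hyperbolic A f Hf) as Htau.
  set (x1 := ac f x0).
  assert (L1 : L x1) by now apply axis_act_closed.
  set (a := axis_coord (C x0)). set (b := axis_coord (C x1)).
  assert (Hab : Rabs (b - a) = tl A f).
  { unfold a, b. rewrite <- axis_coord_dist, HC, tdist_sym by auto. apply Hx0. }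
  assert (Hq : forall q, L q -> Rabs (axis_coord (C q) - a) = Rabs (axis_coord q) /\
                           Rabs (axis_coord (C q) - b) = Rabs (axis_coord q - tl A f)).
  { intros q Lq. unfold a, b. rewrite <- !axis_coord_dist, !HC by auto.
    rewrite (axis_coord_dist q x0), (axis_coord_dist q x1) by auto.
    unfold x1. now rewrite axis_coord_x0, axis_coord_act_x0, Rminus_0_r. }
  destruct (Req_dec (b - a) (tl A f)) as [E|E]; [exists 1, a | exists (-1), a];
    (split; [auto|]); intros q Lq; destruct (Hq q Lq) as [h1 h2];
    destruct (Rabs_trilaterate _ _ _ _ _ Htau Hab h1 h2) as [[? X]|[? X]]; lra.
Qed.

Lemma axis_isometry_translation C : isometry C -> (forall q, L q -> L (C q)) ->
  (forall q, L q -> C (C q) <> q) ->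
  exists a, forall q, L q -> axis_coord (C q) = axis_coord q + a.
Proof.
  intros HC HCL Hnoinv.
  destruct (axis_isometry_affine C HC HCL) as [e [a [[-> | ->] He]]].
  - exists a. intros q Lq. rewrite He by exact Lq. ring.
  - exfalso. apply (Hnoinv x0 Hx0), tdist_le0_eq.
    rewrite axis_coord_dist, !He, axis_coord_x0 by auto.
    replace (-1 * (-1 * 0 + a) + a - 0) with 0 by ring. rewrite Rabs_R0. lra.
Qed.

Lemma axis_isometry_fix_two C x y : isometry C -> (forall q, L q -> L (C q)) ->
  L x -> L y -> C x = x -> C y = y -> 0 < d x y ->
  forall q, L q -> axis_coord (C q) = axis_coord q.
Proof.
  intros HC HCL Lx Ly Cx Cy Dxy.
  destruct (axis_isometry_affine C HC HCL) as [e [a [[-> | ->] He]]].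
  - pose proof (He x Lx) as Ex. rewrite Cx in Ex. intros q Lq. rewrite He by exact Lq. lra.
  - exfalso. pose proof (He x Lx) as Ex. pose proof (He y Ly) as Ey.
    rewrite Cx in Ex. rewrite Cy in Ey.
    rewrite axis_coord_dist in Dxy by auto.
    replace (axis_coord x - axis_coord y) with 0 in Dxy by lra. rewrite Rabs_R0 in Dxy. lra.
Qed.

Definition translates_axis (c : G) (t : R) : Prop :=
  forall q, L q -> L (ac c q) /\ (exists r, L r /\ ac c r = q) /\
               axis_coord (ac c q) = axis_coord q + t.

Lemma translates_axis_one : translates_axis gone 0.
Proof.
  intros q Lq. rewrite act_one. split; [exact Lq | split; [|ring]].
  exists q. now rewrite act_one.
Qed.

Lemma translates_axis_mul a b ta tb :
  translates_axis a ta -> translates_axis b tb -> translates_axis (gmul a b) (ta + tb).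
Proof.
  intros Ha Hb q Lq. rewrite act_mul.
  destruct (Hb q Lq) as [Lb [_ Sb]]. destruct (Ha _ Lb) as [La [_ Sa]].
  split; [exact La | split].
  - destruct (Ha q Lq) as [_ [[r1 [Lr1 Er1]] _]].
    destruct (Hb r1 Lr1) as [_ [[r2 [Lr2 Er2]] _]].
    exists r2. split; [exact Lr2|]. now rewrite act_mul, Er2.
  - rewrite Sa, Sb. ring.
Qed.

Lemma translates_axis_inv a ta : translates_axis a ta -> translates_axis (ginv a) (- ta).
Proof.
  intros Ha q Lq.
  destruct (Ha q Lq) as [La [[r [Lr Er]] _]].
  replace (ac (ginv a) q) with r by (rewrite <- Er; symmetry; apply act_inv_l).
  split; [exact Lr | split].
  - exists (ac a q). split; [exact La | apply act_inv_l].
  - destruct (Ha r Lr) as [_ [_ S]]. rewrite Er in S. lra.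
Qed.

Lemma translates_axis_gpow a ta n : translates_axis a ta -> translates_axis (gpow a n) (INR n * ta).
Proof.
  intro Ha. induction n as [|n IH]; simpl gpow.
  - rewrite Rmult_0_l. apply translates_axis_one.
  - rewrite S_INR. replace ((INR n + 1) * ta) with (ta + INR n * ta) by ring.
    now apply translates_axis_mul.
Qed.

Lemma translates_axis_gen2 g h tg th : translates_axis g tg -> translates_axis h th ->
  forall a, gen2 g h a -> exists t, translates_axis a t.
Proof.
  intros Hg Hh a Ha. induction Ha as [| | | x _ [t Ht] | x y _ [t1 H1] _ [t2 H2]].
  - exists 0. apply translates_axis_one.
  - now exists tg.
  - now exists th.
  - exists (- t). now apply translates_axis_inv.
  - exists (t1 + t2). now apply translates_axis_mul.
Qed.

Lemma tl_translates_axis c t : translates_axis c t -> tl A c = Rabs t.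
Proof.
  intro Hc. rewrite (tl_eq_gap A c x0).
  destruct (Hc x0 Hx0) as [L1 [_ S1]]. destruct (Hc _ L1) as [L2 [_ S2]].
  rewrite (axis_coord_dist x0 (ac c (ac c x0))), (axis_coord_dist x0 (ac c x0)), S2, S1
    by auto.
  replace (axis_coord x0 - (axis_coord x0 + t + t)) with (-(2 * t)) by ring.
  replace (axis_coord x0 - (axis_coord x0 + t)) with (- t) by ring.
  rewrite !Rabs_Ropp. split_Rmax; split_Rabs; lra.
Qed.

Lemma abelian2_of_translates_axis g h tg th :
  translates_axis g tg -> translates_axis h th -> abelian2 A g h.
Proof.
  intros Hg Hh a b Ha Hb.
  destruct (translates_axis_gen2 g h tg th Hg Hh a Ha) as [ta Ta].
  destruct (translates_axis_gen2 g h tg th Hg Hh b Hb) as [tb Tb].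
  rewrite (tl_translates_axis _ _ Ta), (tl_translates_axis _ _ Tb),
    (tl_translates_axis _ _ (translates_axis_mul a b ta tb Ta Tb)).
  apply Rabs_triang.
Qed.

End AxisCoordinate.

Section Acylindricity.
Context {G : Group} {T : RealTree} (A : Action G T).
Notation d := (@tdist T).
Notation ac := (act A).

Lemma len_gt_of_dist (S : T -> Prop) r x y : S x -> S y -> r < d x y -> Rbar_lt r (len S).
Proof.
  intros Sx Sy Hr. unfold len.
  destruct (Lub_Rbar_correct (fun r => exists x y, S x /\ S y /\ r = d x y)) as [Hub _].
  apply (Rbar_lt_le_trans _ (d x y)); [exact Hr|].
  apply Hub. now exists x, y.
Qed.

Lemma len_le_of_dist (S : T -> Prop) c :
  (forall x y, S x -> S y -> d x y <= c) -> Rbar_le (len S) c.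
Proof.
  intro H. unfold len.
  destruct (Lub_Rbar_correct (fun r => exists x y, S x /\ S y /\ r = d x y)) as [_ Hlub].
  apply Hlub. intros r [x [y [Sx [Sy ->]]]]. now apply H.
Qed.

Lemma half_exponent_bounds lam a i : 0 <= a -> 10 * Rmax lam 1 <= INR i ->
  5 * (lam * a) <= / 2 * (INR i * a) /\ 5 * a <= / 2 * (INR i * a).
Proof. intros. pose proof (Rmax_l lam 1). pose proof (Rmax_r lam 1). split; nra. Qed.

Lemma good_elt_hyperbolic lam k : good_elt A lam k -> hyperbolic A k ->
  exists k0 j, weakly_stable A lam k0 /\ 10 * Rmax lam 1 <= INR (S j) /\ k = gpow k0 (S j).
Proof.
  intros [Hell | [k0 [[|j] [Ws [Hm ->]]]]] Hk; [contradiction | | now exists k0, j; auto with real].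
  exfalso. simpl in Hm. pose proof (Rmax_r lam 1). lra.
Qed.

Lemma weakly_stable_gpow lam g0 k : weakly_stable A lam g0 ->
  10 * Rmax lam 1 <= INR (S k) -> weakly_stable A (1/3) (gpow g0 (S k)).
Proof.
  intros [Hg0 Ws] Hk.
  assert (AxE : forall p, Ax A (gpow g0 (S k)) p <-> Ax A g0 p) by (intro; now apply Ax_gpow).
  assert (ImE : forall c q, img A c (Ax A (gpow g0 (S k))) q <-> img A c (Ax A g0) q).
  { intros c q. unfold img. now setoid_rewrite AxE. }
  split; [now apply hyperbolic_gpow|]. intros c Hc.
  assert (LE : len (fun p => Ax A (gpow g0 (S k)) p /\ img A c (Ax A (gpow g0 (S k))) p) =
               len (fun p => Ax A g0 p /\ img A c (Ax A g0) p)).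
  { unfold len. apply Lub_Rbar_eqset. intro r. now setoid_rewrite AxE; setoid_rewrite ImE. }
  rewrite LE in Hc.
  assert (Hin : inE A g0 c).
  { apply Ws. apply (Rbar_le_lt_trans _ (1/3 * tl A (gpow g0 (S k)))); [|exact Hc].
    change (lam * tl A g0 <= 1/3 * tl A (gpow g0 (S k))). rewrite tl_gpow by exact Hg0.
    pose proof (Rmult_le_pos _ _ (pos_INR (S k)) (tl_ge0 A g0)).
    destruct (half_exponent_bounds lam (tl A g0) (S k) (tl_ge0 A g0) Hk). lra. }
  intro q. rewrite ImE, AxE. apply Hin.
Qed.

Lemma inE_of_long_overlap lam k c p p' : weakly_stable A lam k ->
  axis_of A k p -> axis_of A k p' ->
  (exists u, axis_of A k u /\ ac c u = p) ->
  (exists u, axis_of A k u /\ ac c u = p') ->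
  lam * tl A k < d p p' -> inE A k c.
Proof.
  intros [Hk Ws] Lp Lp' [u [Lu Eu]] [u' [Lu' Eu']] Hlong.
  apply Ws, (len_gt_of_dist _ _ p p'); [| |exact Hlong]; split.
  - now apply Ax_hyperbolic.
  - exists u. split; [now apply Ax_hyperbolic | exact Eu].
  - now apply Ax_hyperbolic.
  - exists u'. split; [now apply Ax_hyperbolic | exact Eu'].
Qed.

Lemma inE_axis_preserved k c : hyperbolic A k -> inE A k c ->
  (forall q, axis_of A k q -> axis_of A k (ac c q)) /\
  (forall q, axis_of A k q -> exists r, axis_of A k r /\ ac c r = q).
Proof.
  intros Hk Hin. split.
  - intros q Lq. apply (Ax_hyperbolic A k); [exact Hk|].
    apply Hin. exists q. split; [|reflexivity]. now apply Ax_hyperbolic.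
  - intros q Lq. apply (Ax_hyperbolic A k), Hin in Lq; [|exact Hk].
    destruct Lq as [r [Ar Er]]. exists r. split; [|exact Er]. now apply Ax_hyperbolic.
Qed.

Lemma translates_axis_of_preserved f x0 c : hyperbolic A f -> axis_of A f x0 ->
  hyperbolic A c ->
  (forall q, axis_of A f q -> axis_of A f (ac c q)) ->
  (forall q, axis_of A f q -> exists r, axis_of A f r /\ ac c r = q) ->
  exists t, translates_axis A f x0 c t.
Proof.
  intros Hf L0 Hc Hinto Honto.
  destruct (axis_isometry_translation A f x0 Hf L0 (ac c) (act_isometry A c) Hinto) as [t Ht].
  - intros q _ E. pose proof (hyperbolic_gap A c Hc q) as Hgap.
    pose proof (tl_pos_hyperbolic A c Hc). pose proof (tdist_ge0 T q (ac c q)).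
    rewrite E, tdist_xx in Hgap. lra.
  - exists t. intros q Lq. auto.
Qed.

Lemma translates_axis_self f x0 : hyperbolic A f -> axis_of A f x0 ->
  exists t, translates_axis A f x0 f t.
Proof.
  intros Hf L0. apply translates_axis_of_preserved; auto using axis_act_closed.
  intros q Lq. exists (ac (ginv f) q). split; [now apply axis_act_inv_closed | apply act_inv_r].
Qed.

Lemma long_overlap_elliptic_hyperbolic lam e k x y :
  good_elt A lam k -> hyperbolic A k ->
  ac e x = x -> ac e y = y -> Ax A k x -> Ax A k y -> / 2 * tl A k < d x y ->
  abelian2 A e k.
Proof.
  intros Gk Hk Ex Ey Akx Aky Hlong.
  destruct (good_elt_hyperbolic lam k Gk Hk) as [k0 [j [Ws [Hj ->]]]].
  pose proof (proj1 Ws) as Hk0.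
  rewrite Ax_gpow, Ax_hyperbolic in Akx, Aky by exact Hk0.
  rewrite tl_gpow in Hlong by exact Hk0.
  destruct (half_exponent_bounds lam (tl A k0) (S j) (tl_ge0 A k0) Hj).
  pose proof (tl_ge0 A k0).
  assert (Hin : inE A k0 e)
    by (apply (inE_of_long_overlap lam k0 e x y Ws Akx Aky); eauto; lra).
  destruct (inE_axis_preserved k0 e Hk0 Hin) as [Hinto Honto].
  destruct (translates_axis_self k0 x Hk0 Akx) as [t Ht].
  apply (abelian2_of_translates_axis A k0 x Hk0 Akx _ _ 0 (INR (S j) * t));
    [|now apply translates_axis_gpow].
  intros q Lq. split; [now apply Hinto | split; [now apply Honto|]].
  rewrite Rplus_0_r.
  apply (axis_isometry_fix_two A k0 x Hk0 Akx (ac e) x y); auto using act_isometry; lra.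
Qed.

(* With d(x, h0 y) = d(x,y) + tl h0, the point h0 x lies on [x,y]; so [h0 x, y] = h0 [x, h0^-1 y]
   is a segment of A(g0) (axes are convex) whose h0-preimage is also in A(g0). *)
Lemma inE_of_shifted_common_segment lam g0 h0 x y : weakly_stable A lam g0 ->
  axis_of A g0 x -> axis_of A g0 y -> axis_of A h0 x -> axis_of A h0 y ->
  tl A h0 < d x y -> d x (ac h0 y) = d x y + tl A h0 ->
  lam * tl A g0 < d x y - tl A h0 -> inE A g0 h0.
Proof.
  intros Ws Lgx Lgy Lhx Lhy Hl Hv Hlong.
  pose proof (axis_orientation (ac h0) (act_isometry A h0) (tl A h0) x y Lhx Lhy Hl Hv) as O.
  assert (Between : forall z, d x z + d z y = d x y -> axis_of A g0 z)
    by (intros z Hz; apply (axis_convex (ac g0) (act_isometry A g0) (tl A g0)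
                              (hyperbolic_gap A g0 (proj1 Ws)) x y z); auto).
  unfold axis in Lhx, Lhy.
  apply (inE_of_long_overlap lam g0 h0 (ac h0 x) y Ws); [| exact Lgy | | | now rewrite O].
  - apply Between. rewrite O, Lhx. ring.
  - now exists x.
  - exists (ac (ginv h0) y). split; [|apply act_inv_r].
    apply Between.
    rewrite <- (act_isom _ _ A h0 x), <- (act_isom _ _ A h0 _ y), act_inv_r, O, tdist_sym, Lhy.
    ring.
Qed.

Lemma long_overlap_hyperbolic lam g h x y :
  good_elt A lam g -> good_elt A lam h -> hyperbolic A g -> hyperbolic A h ->
  Ax A g x -> Ax A g y -> Ax A h x -> Ax A h y -> / 2 * Rmax (tl A g) (tl A h) < d x y ->
  abelian2 A g h.
Proof.
  intros Gg Gh Hg Hh Agx Agy Ahx Ahy Hlong.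
  destruct (good_elt_hyperbolic lam g Gg Hg) as [g0 [i [Wg [Hi ->]]]].
  destruct (good_elt_hyperbolic lam h Gh Hh) as [h0 [j [Wh [Hj ->]]]].
  pose proof (proj1 Wg) as Hg0. pose proof (proj1 Wh) as Hh0.
  rewrite Ax_gpow, Ax_hyperbolic in Agx, Agy, Ahx, Ahy by auto.
  rewrite !tl_gpow in Hlong by auto.
  destruct (half_exponent_bounds lam (tl A g0) (S i) (tl_ge0 A g0) Hi).
  destruct (half_exponent_bounds lam (tl A h0) (S j) (tl_ge0 A h0) Hj).
  pose proof (Rmax_l (INR (S i) * tl A g0) (INR (S j) * tl A h0)).
  pose proof (Rmax_r (INR (S i) * tl A g0) (INR (S j) * tl A h0)).
  pose proof (tl_ge0 A g0). pose proof (tl_ge0 A h0).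
  assert (Hin : inE A g0 h0).
  { destruct (axis_dist_shift (ac h0) (act_isometry A h0) (tl A h0) (hyperbolic_gap A h0 Hh0)
                x y Ahx) as [Hv|Hv].
    - apply (inE_of_shifted_common_segment lam g0 h0 x y); auto; lra.
    - rewrite (tdist_sym T x y) in *.
      apply (inE_of_shifted_common_segment lam g0 h0 y x); auto;
        [lra | now rewrite tdist_sym | lra]. }
  destruct (inE_axis_preserved g0 h0 Hg0 Hin) as [Hinto Honto].
  destruct (translates_axis_self g0 x Hg0 Agx) as [tg Tg].
  destruct (translates_axis_of_preserved g0 x h0 Hg0 Agx Hh0 Hinto Honto) as [th Th].
  apply (abelian2_of_translates_axis A g0 x Hg0 Agx _ _ (INR (S i) * tg) (INR (S j) * th));
    now apply translates_axis_gpow.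
Qed.

Lemma abelian2_of_common_fixed_point g h x : ac g x = x -> ac h x = x -> abelian2 A g h.
Proof.
  intros Hg Hh.
  assert (Fix : forall a, gen2 g h a -> ac a x = x).
  { intros a Ha. induction Ha as [| | | a _ IH | a b _ IHa _ IHb]; auto.
    - apply act_one.
    - rewrite <- IH at 1. apply act_inv_l.
    - now rewrite act_mul, IHb, IHa. }
  assert (Zero : forall a, gen2 g h a -> tl A a = 0)
    by (intros a Ha; apply tl_elliptic; now exists x; apply Fix).
  intros a b Ha Hb. rewrite (Zero a), (Zero b), (Zero (gmul a b)) by auto using gen2_mul. lra.
Qed.

Lemma abelian2_comm g h : abelian2 A g h -> abelian2 A h g.
Proof.
  assert (Swap : forall a, gen2 h g a -> gen2 g h a)
    by (intros a Ha; induction Ha; auto using gen2).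
  intros Hab a b Ha Hb. apply Hab; auto.
Qed.

Lemma long_overlap_abelian lam g h x y : good_elt A lam g -> good_elt A lam h ->
  Ax A g x -> Ax A h x -> Ax A g y -> Ax A h y -> / 2 * Rmax (tl A g) (tl A h) < d x y ->
  abelian2 A g h.
Proof.
  intros Gg Gh Agx Ahx Agy Ahy Hlong.
  destruct (classic (elliptic A g)) as [Eg|Hg]; destruct (classic (elliptic A h)) as [Eh|Hh].
  - rewrite Ax_elliptic in Agx, Ahx by auto. now apply (abelian2_of_common_fixed_point g h x).
  - rewrite (tl_elliptic A g Eg), Rmax_right in Hlong by apply tl_ge0.
    rewrite Ax_elliptic in Agx, Agy by auto.
    now apply (long_overlap_elliptic_hyperbolic lam g h x y).
  - rewrite (tl_elliptic A h Eh), Rmax_left in Hlong by apply tl_ge0.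
    rewrite Ax_elliptic in Ahx, Ahy by auto.
    now apply abelian2_comm, (long_overlap_elliptic_hyperbolic lam h g x y).
  - now apply (long_overlap_hyperbolic lam g h x y).
Qed.

Lemma good_elt_weakly_stable lam g : good_elt A lam g -> hyperbolic A g ->
  weakly_stable A (1/3) g.
Proof.
  intros Gg Hg. destruct (good_elt_hyperbolic lam g Gg Hg) as [g0 [j [Ws [Hj ->]]]].
  now apply (weakly_stable_gpow lam).
Qed.

End Acylindricity.

Theorem mainTheorem11 (G : Group) (T : RealTree) (A : Action G T)
  (g h : G) (lam : R) :
  0 < lam ->
  irreducible2 A g h ->
  good_elt A lam g ->
  good_elt A lam h ->
  acylindrical_pair A g h.
Proof.
  intros _ Hirr Gg Gh.
  split; [exact Hirr | split; [| split]].
  - apply len_le_of_dist. intros x y [Agx Ahx] [Agy Ahy].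
    apply Rnot_lt_le. intro Hlong. apply (proj1 Hirr).
    now apply (long_overlap_abelian A lam g h x y).
  - now apply (good_elt_weakly_stable A lam).
  - now apply (good_elt_weakly_stable A lam).
Qed.
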